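(* For every $(\varepsilon,\delta)\in\mathbb{R}^2$, the following relations hold for transformations of the set of marked boxes: $$\sigma_{(-\varepsilon,-\delta)}=\sigma_{(\varepsilon,\delta)}^{-1}\qquad\text{and}\qquad i\,\sigma_{(\varepsilon,\delta)}=\sigma_{(-\varepsilon,-\delta)}\,i.$$
   Context: Let $V$ be a 3-dimensional real vector space. An overmarked box is $\Theta=((p,q,r,s;t,b),(P,Q,R,S;T,B))$ with $p,\dots,b\in\mathbf{P}(V)$ and lines $P,\dots,B$ of $\mathbf{P}(V)$ such that $P=ts$, $Q=tr$, $R=bq$, $S=bp$, $T=pq$, $B=rs$ (here $xy$ is the line through $x,y$) and $T\cap B\notin\{p,q,r,s,t,b\}$. A $\Theta$-basis is a basis of $V$, unique up to scaling, in which $p=[-1:1:0]$, $q=[1:1:0]$, $r=[1:0:1]$, $s=[-1:0:1]$. A marked box is an orbit of $\Theta$ under the involution $j:\Theta\mapsto((q,p,s,r;t,b),(Q,P,S,R;T,B))$. The involution $i$ maps $\Theta$ to $((s,r,p,q;b,t),(R,S,Q,P;B,T))$; it commutes with $j$ and acts on marked boxes. For $(\varepsilon,\delta)\in\mathbb{R}^2$ let $$\Sigma_{(\varepsilon,\delta)}=\begin{pmatrix}1&0&0\\0&e^{-\delta}\cosh\varepsilon&-\sinh\varepsilon\\0&-\sinh\varepsilon&e^{\delta}\cosh\varepsilon\end{pmatrix}$$ and let $\sigma_{(\varepsilon,\delta)}(\Theta)$ be the image of $\Theta$ under the projective transformation with matrix $\Sigma_{(\varepsilon,\delta)}$ in a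 $\Theta$-basis; it commutes with $j$ and thus acts on marked boxes. *)

From HB Require Import structures.
From mathcomp Require Import all_boot all_order all_algebra.
From mathcomp Require Import classical_sets reals.
From mathcomp Require Import sequences exp.
Set Implicit Arguments. Unset Strict Implicit. Unset Printing Implicit Defensive.
Import Order.TTheory GRing.Theory Num.Theory.
Local Open Scope ring_scope.

Section Boxes.
Variable R : realType.

Definition cosh (x : R) : R := (expR x + expR (- x)) / 2.
Definition sinh (x : R) : R := (expR x - expR (- x)) / 2.

(* A subspace of V = R^3 is represented canonically by the square matrix
   <<A>>%MS (genmx), so that equal subspaces are equal matrices. *)
Definition is_point (x : 'M[R]_3) : Prop := \rank x = 1%N /\ <<x>>%MS = x.
Definition is_line (X : 'M[R]_3) : Prop := \rank X = 2%N /\ <<X>>%MS = X.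

Definition join (x y : 'M[R]_3) : 'M[R]_3 := (x + y)%MS.

Definition pt (v : 'rV[R]_3) : 'M[R]_3 := <<v>>%MS.

Definition vec3 (a b c : R) : 'rV[R]_3 :=
  \row_(k < 3) (if k == 0 :> nat then a else if k == 1 :> nat then b else c).

Record obox := Obox {
  bp : 'M[R]_3; bq : 'M[R]_3; br : 'M[R]_3; bs : 'M[R]_3; bt : 'M[R]_3; bb : 'M[R]_3;
  bP : 'M[R]_3; bQ : 'M[R]_3; bR : 'M[R]_3; bS : 'M[R]_3; bT : 'M[R]_3; bB : 'M[R]_3 }.

Definition is_obox (X : obox) : Prop :=
  (is_point (bp X) /\ is_point (bq X) /\ is_point (br X) /\ is_point (bs X) /\
   is_point (bt X) /\ is_point (bb X)) /\
  (is_line (bP X) /\ is_line (bQ X) /\ is_line (bR X) /\ is_line (bS X) /\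
   is_line (bT X) /\ is_line (bB X)) /\
  (bP X = join (bt X) (bs X) /\ bQ X = join (bt X) (br X) /\
   bR X = join (bb X) (bq X) /\ bS X = join (bb X) (bp X) /\
   bT X = join (bp X) (bq X) /\ bB X = join (br X) (bs X)) /\
  bT X != bB X /\
  let z := (bT X :&: bB X)%MS in
  (z != bp X /\ z != bq X /\ z != br X /\ z != bs X /\ z != bt X /\ z != bb X).

(* Theta-basis: rows of the invertible matrix M are the basis vectors, so that
   the vector with coordinates x is x *m M. *)
Definition is_tbasis (X : obox) (M : 'M[R]_3) : Prop :=
  M \in unitmx /\
  [/\ bp X = pt (vec3 (-1) 1 0 *m M), bq X = pt (vec3 1 1 0 *m M),
      br X = pt (vec3 1 0 1 *m M) & bs X = pt (vec3 (-1) 0 1 *m M)].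

Definition ptrans (g : 'M[R]_3) (x : 'M[R]_3) : 'M[R]_3 := <<x *m g>>%MS.
Definition map_box (g : 'M[R]_3) (X : obox) : obox :=
  Obox (ptrans g (bp X)) (ptrans g (bq X)) (ptrans g (br X)) (ptrans g (bs X))
       (ptrans g (bt X)) (ptrans g (bb X))
       (ptrans g (bP X)) (ptrans g (bQ X)) (ptrans g (bR X)) (ptrans g (bS X))
       (ptrans g (bT X)) (ptrans g (bB X)).

Definition Sigma (e d : R) : 'M[R]_3 :=
  \matrix_(i < 3, k < 3)
    (if (i == 0 :> nat) && (k == 0 :> nat) then 1
     else if (i == 1 :> nat) && (k == 1 :> nat) then expR (- d) * cosh e
     else if (i == 1 :> nat) && (k == 2 :> nat) then - sinh e
     else if (i == 2 :> nat) && (k == 1 :> nat) then - sinh e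
     else if (i == 2 :> nat) && (k == 2 :> nat) then expR d * cosh e
     else 0).

(* sigma_(e,d)(X) = Y : Y is the image of X under the projective map with
   matrix Sigma in a Theta-basis of X.  In coordinates x (row) |-> x Sigma^T
   = x Sigma (Sigma is symmetric), i.e. on vectors v |-> v M^-1 Sigma M.
   Stated as a relation (functional on overmarked boxes, since the Theta-basis
   is unique up to scaling). *)
Definition sigma_rel (e d : R) (X Y : obox) : Prop :=
  is_obox X /\
  exists M, is_tbasis X M /\ Y = map_box (invmx M *m Sigma e d *m M) X.

Definition jbox (X : obox) : obox :=
  Obox (bq X) (bp X) (bs X) (br X) (bt X) (bb X)
       (bQ X) (bP X) (bS X) (bR X) (bT X) (bB X).

Definition ibox (X : obox) : obox :=
  Obox (bs X) (br X) (bp X) (bq X) (bb X) (bt X)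
       (bR X) (bS X) (bQ X) (bP X) (bB X) (bT X).

Local Open Scope classical_set_scope.

(* the marked box of X: its orbit under j *)
Definition mbox (X : obox) : set obox := [set Y | Y = X \/ Y = jbox X].
Definition is_mbox (A : set obox) : Prop := exists X, is_obox X /\ A = mbox X.

Definition rel_image (Rl : obox -> obox -> Prop) (A : set obox) : set obox :=
  [set Y | exists2 X, A X & Rl X Y].
Definition sigma_mb (e d : R) (A : set obox) : set obox := rel_image (sigma_rel e d) A.
Definition i_mb (A : set obox) : set obox := ibox @` A.

End Boxes.

From HB Require Import structures.
From mathcomp Require Import all_boot all_order all_algebra.
From mathcomp Require Import classical_sets reals.
From mathcomp Require Import sequences exp.
From mathcomp Require Import ring lra.
Set Implicit Arguments. Unset Strict Implicit. Unset Printing Implicit Defensive.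
Import Order.TTheory GRing.Theory Num.Theory.
Local Open Scope ring_scope.

(* A Theta-basis of an overmarked box exists because no three of p, q, r, s
   are collinear (otherwise T :&: B would be one of them), and it is unique up
   to a scalar; hence sigma_(e,d) is the projective map with matrix
   M^-1 Sigma(e,d) M for any Theta-basis M.  The image box has Theta-basis
   Sigma(e,d) M, and Sigma(-e,-d) = Sigma(e,d)^-1 because Sigma(e,d) is
   diag(1, S) with S symmetric of determinant cosh^2 e - sinh^2 e = 1; this
   gives the first relation.  For the second, i is realised in coordinates by
   Q : (x,y,z) |-> (x,-z,y), which maps the frame of p, q, r, s onto that of
   s, r, p, q up to signs, so Q M is a Theta-basis of i(X); and Q conjugates
   Sigma(-e,-d) into Sigma(e,d). *)

Lemma submx_of_rank_geq (F : fieldType) m1 m2 n (A : 'M[F]_(m1, n)) (B : 'M_(m2, n)) :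
  (A <= B)%MS -> (\rank B <= \rank A)%N -> (B <= A)%MS.
Proof. by move=> sAB le; rewrite -(mxrank_leqif_sup sAB).2 eqn_leq le mxrankS. Qed.

Section MarkedBoxes.
Variable R : realType.
Implicit Types (x y z g h G H M N : 'M[R]_3) (u v w : 'rV[R]_3) (X : obox R).

Lemma genmx_fixed_eq x y : <<x>>%MS = x -> <<y>>%MS = y -> (x == y)%MS -> x = y.
Proof. by move=> gx gy /genmxP; rewrite gx gy. Qed.

Lemma cap_lines x y z : is_line x -> is_line y -> x != y -> is_point z ->
  (z <= x)%MS -> (z <= y)%MS -> (x :&: y)%MS = z.
Proof.
move=> [rx gx] [ry gy] xy [rz gz] zx zy.
have le1 : (\rank (x :&: y) <= 1)%N.
  rewrite leqNgt; apply: contra xy => r2.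
  have sxy : (x <= y)%MS.
    apply: submx_trans (capmxSr x y); apply: submx_of_rank_geq (capmxSl x y) _.
    by rewrite rx.
  have syx : (y <= x)%MS.
    apply: submx_trans (capmxSl x y); apply: submx_of_rank_geq (capmxSr x y) _.
    by rewrite ry.
  by apply/eqP/genmx_fixed_eq => //; rewrite sxy.
have zc : (z <= x :&: y)%MS by rewrite sub_capmx zx.
apply: genmx_fixed_eq => //; first by rewrite genmx_cap gx gy.
by rewrite zc andbT submx_of_rank_geq // rz.
Qed.

Lemma sub_join_exchange y r s : is_line (join r s) -> is_point y -> is_point r ->
  (s <= y + r)%MS -> (y <= join r s)%MS.
Proof.
move=> [rB _] [ry _] [rr _] sy.
have sB : (join r s <= y + r)%MS by rewrite addsmx_sub addsmxSr.
have le2 : (\rank (y + r) <= \rank (join r s))%N.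
  by rewrite rB; have := (mxrank_adds_leqif y r).1; rewrite ry rr.
exact: submx_trans (addsmxSl y r) (submx_of_rank_geq sB le2).
Qed.

Lemma obox_general_position X : is_obox X ->
  [/\ ~~ (br X <= bp X + bq X)%MS, ~~ (bs X <= bp X + bq X)%MS,
      ~~ (bs X <= bq X + br X)%MS & ~~ (bs X <= bp X + br X)%MS].
Proof.
move=> [[hp [hq [hr [hs _]]]] [[_ [_ [_ [_ [hT hB]]]]]
  [[_ [_ [_ [_ [eT eB]]]]] [TB [zp [zq [zr [zs _]]]]]]]].
have onT y : (y <= bp X + bq X)%MS -> (y <= bT X)%MS by rewrite eT.
have onB y : (y <= br X + bs X)%MS -> (y <= bB X)%MS by rewrite eB.
split; apply/negP => h.
- by move/eqP: zr; apply; apply: cap_lines (onT _ h) (onB _ (addsmxSl _ _)).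
- by move/eqP: zs; apply; apply: cap_lines (onT _ h) (onB _ (addsmxSr _ _)).
- move/eqP: zq; apply; apply: cap_lines (onT _ (addsmxSr _ _)) _ => //.
  by rewrite eB; apply: sub_join_exchange h => //; rewrite -eB.
- move/eqP: zp; apply; apply: cap_lines (onT _ (addsmxSl _ _)) _ => //.
  by rewrite eB; apply: sub_join_exchange h => //; rewrite -eB.
Qed.

Definition mx3 u v w : 'M[R]_3 := \matrix_(i < 3) [:: u; v; w]`_i.

Lemma ord3P (i : 'I_3) : [\/ i = 0, i = 1 | i = 2].
Proof.
by case: i => [[|[|[|//]]] Hi]; [apply: Or31 | apply: Or32 | apply: Or33]; apply: val_inj.
Qed.

Lemma vec3_mulmx (a b c : R) (K : 'M[R]_3) :
  vec3 a b c *m K = a *: row 0 K + b *: row 1 K + c *: row 2 K.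
Proof.
apply/rowP => j; rewrite !mxE !big_ord_recr big_ord0 /= !mxE /= add0r.
by congr (_ * K _ _ + _ * K _ _ + _ * K _ _); apply: val_inj.
Qed.

Lemma vec3_mul_mx3 (a b c : R) u v w :
  vec3 a b c *m mx3 u v w = a *: u + b *: v + c *: w.
Proof. by rewrite vec3_mulmx !rowK. Qed.

Lemma rV_vec3 v : v = vec3 (v 0 0) (v 0 1) (v 0 2).
Proof. by apply/rowP => j; rewrite mxE; case: (ord3P j) => ->. Qed.

Lemma mx3_eqmx u v w : (mx3 u v w :=: u + (v + w))%MS.
Proof.
apply/eqmxP/andP; split.
  apply/row_subP => i; rewrite rowK.
  case: (ord3P i) => -> /=; rewrite ?addsmxSl //.
    exact: submx_trans (addsmxSl v w) (addsmxSr u _).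
  exact: submx_trans (addsmxSr v w) (addsmxSr u _).
have row_sub (a b c : R) : ((a *: u + b *: v + c *: w)%R <= mx3 u v w)%MS.
  by rewrite -vec3_mul_mx3 submxMl.
rewrite !addsmx_sub; apply/and3P; split.
- by have := row_sub 1 0 0; rewrite scale1r !scale0r !addr0.
- by have := row_sub 0 1 0; rewrite scale1r !scale0r addr0 add0r.
- by have := row_sub 0 0 1; rewrite scale1r !scale0r !add0r.
Qed.

Lemma mx3_unit u v w : \rank (u + v)%MS = 2%N -> ~~ (w <= u + v)%MS ->
  mx3 u v w \in unitmx.
Proof.
move=> r2 nw; have lt : ((u + v)%MS < (u + v + w)%MS)%MS.
  by rewrite ltmxE addsmxSl addsmx_sub submx_refl (negbTE nw).
rewrite -row_full_unit /row_full (mx3_eqmx u v w) addsmxA eqn_leq rank_leq_col.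
by have := rank_ltmx lt; rewrite r2.
Qed.

Lemma vec3N (a b c : R) : vec3 (- a) (- b) (- c) = - vec3 a b c.
Proof. by apply/rowP => j; rewrite !mxE; case: ifP => _ //; case: ifP. Qed.

Lemma ptN w : pt (- w) = pt w.
Proof. exact/eq_genmx/eqmx_opp. Qed.

Lemma pt_scale (a : R) w : a != 0 -> pt (a *: w) = pt w.
Proof. by move=> a0; apply/eq_genmx/eqmx_scale. Qed.

Lemma pt_sub_join u v w : (pt w <= pt u + pt v)%MS = (w <= u + v)%MS.
Proof. by rewrite /pt -genmx_adds !genmxE. Qed.

Lemma point_pt x : is_point x -> exists v, x = pt v.
Proof.
move=> [rx gx]; exists (nz_row x); rewrite /pt -{1}gx; apply/genmxP.
have nz : nz_row x != 0 by rewrite nz_row_eq0 -mxrank_eq0 rx.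
rewrite nz_row_sub andbT; apply: submx_of_rank_geq (nz_row_sub x) _.
by rewrite rx rank_rV nz.
Qed.

Lemma frame_basis a b c (al be ga : R) : mx3 a b c \in unitmx ->
  al != 0 -> be != 0 -> ga != 0 ->
  exists2 M, M \in unitmx &
  [/\ vec3 (-1) 1 0 *m M = al *: a, vec3 1 1 0 *m M = - be *: b,
      vec3 1 0 1 *m M = ga *: c & vec3 (-1) 0 1 *m M = al *: a + be *: b + ga *: c].
Proof.
(* the rows m0, m1, m2 solve m1 - m0 = al a, m0 + m1 = - be b, m0 + m2 = ga c
   and m2 - m0 = al a + be b + ga c *)
move=> uK al0 be0 ga0; pose m := al *: a + be *: b.
pose M := mx3 (- 2^-1 *: m) (2^-1 *: (al *: a - be *: b)) (ga *: c + 2^-1 *: m).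
have images : [/\ vec3 (-1) 1 0 *m M = al *: a, vec3 1 1 0 *m M = - be *: b,
    vec3 1 0 1 *m M = ga *: c & vec3 (-1) 0 1 *m M = al *: a + be *: b + ga *: c].
  by rewrite !vec3_mul_mx3; split; apply/rowP => j; rewrite !mxE; field.
exists M => //; case: images => ea eb ec _.
rewrite -row_full_unit -sub1mx; apply: submx_trans (_ : mx3 a b c <= M)%MS.
  by rewrite sub1mx row_full_unit.
rewrite (mx3_eqmx a b c) !addsmx_sub -(eqmx_scale a al0) -(eqmx_scale c ga0).
by rewrite -(eqmx_scale b (_ : - be != 0)) ?oppr_eq0 // -ea -eb -ec !submxMl.
Qed.

Lemma tbasis_exists X : is_obox X -> exists M, is_tbasis X M.
Proof.
case: X => p q r s ? ? ? ? ? ? T ? hX; move: (obox_general_position hX) => /=.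
case: hX => /= [[hp [hq [hr [hs _]]]] [[_ [_ [_ [_ [[rT _] _]]]]] [[_ [_ [_ [_ [eT _]]]]] _]]].
move: rT; rewrite {}eT.
have [a ->] := point_pt hp; have [b ->] := point_pt hq.
have [c ->] := point_pt hr; have [d ->] := point_pt hs.
move=> rT; rewrite !pt_sub_join => -[npq_r npq_s nqr_s npr_s].
have rab : \rank (a + b)%MS = 2%N by move: rT; rewrite /join /pt -genmx_adds genmxE.
have uK := mx3_unit rab npq_r.
have [co eco] : exists co, d = co *m mx3 a b c.
  by apply/submxP; apply: submx_full; rewrite row_full_unit.
rewrite (rV_vec3 co) vec3_mul_mx3 in eco.
have sub2 (k l : R) u v : ((k *: u + l *: v)%R <= u + v)%MS.
  by apply: addmx_sub_adds; apply: scalemx_sub.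
have al0 : co 0 0 != 0.
  by apply: contraNneq nqr_s => h; rewrite eco h scale0r add0r sub2.
have be0 : co 0 1 != 0.
  by apply: contraNneq npr_s => h; rewrite eco h scale0r addr0 sub2.
have ga0 : co 0 2 != 0.
  by apply: contraNneq npq_s => h; rewrite eco h scale0r addr0 sub2.
have [M uM [ea eb ec ed]] := frame_basis uK al0 be0 ga0.
exists M; split => //.
by rewrite ea eb ec ed -eco !pt_scale ?oppr_eq0.
Qed.

Lemma pt_mulmx_eq v M N : M \in unitmx -> pt (v *m N) = pt (v *m M) ->
  exists l, v *m (N *m invmx M) = l *: v.
Proof.
move=> uM /genmxP /andP [sNM _]; apply/sub_rVP.
by have := submxMr (invmx M) sNM; rewrite mulmxK // mulmxA.
Qed.

Lemma frame_eigen_scalar (K : 'M[R]_3) (l1 l2 l3 l4 : R) :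
  vec3 (-1) 1 0 *m K = l1 *: vec3 (-1) 1 0 -> vec3 1 1 0 *m K = l2 *: vec3 1 1 0 ->
  vec3 1 0 1 *m K = l3 *: vec3 1 0 1 -> vec3 (-1) 0 1 *m K = l4 *: vec3 (-1) 0 1 ->
  K = l1%:M.
Proof.
move=> /rowP h1 /rowP h2 /rowP h3 /rowP h4.
have := (h1 0, h1 1, h1 2, h2 0, h2 1, h2 2, h3 0, h3 1, h3 2, h4 0, h4 1, h4 2).
rewrite !vec3_mulmx !mxE /= => -[[[[[[[[[[[a1 a2] a3] b1] b2] b3] c1] c2] c3] d1] d2] d3].
apply/matrixP => i j; rewrite !mxE.
by case: (ord3P i) => ->; case: (ord3P j) => -> /=; lra.
Qed.

Lemma tbasis_conj_uniq X M N (S : 'M[R]_3) : is_tbasis X M -> is_tbasis X N ->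
  conjmx (invmx N) S = conjmx (invmx M) S.
Proof.
move=> [uM [p1 q1 r1 s1]] [uN [p2 q2 r2 s2]].
have [l1 h1] := pt_mulmx_eq uM (etrans (esym p2) p1).
have [l2 h2] := pt_mulmx_eq uM (etrans (esym q2) q1).
have [l3 h3] := pt_mulmx_eq uM (etrans (esym r2) r1).
have [l4 h4] := pt_mulmx_eq uM (etrans (esym s2) s1).
have eN : N = l1 *: M.
  by rewrite -[LHS](mulmxKV uM) (frame_eigen_scalar h1 h2 h3 h4) mul_scalar_mx.
have l1_neq0 : l1 != 0.
  by apply: contraTneq uN => l0; rewrite eN l0 scale0r -row_full_unit /row_full mxrank0.
rewrite !conjVmx // eN invmxZ; last by rewrite -eN.
by rewrite -!scalemxAl -scalemxAr scalerA mulVf // scale1r.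
Qed.

Lemma ptrans_mul g h x : ptrans h (ptrans g x) = ptrans (g *m h) x.
Proof. by rewrite /ptrans mulmxA; apply/eq_genmx/eqmxMr/genmxE. Qed.

Lemma ptrans1 x : <<x>>%MS = x -> ptrans 1%:M x = x.
Proof. by rewrite /ptrans mulmx1. Qed.

Lemma ptrans_pt g w : ptrans g (pt w) = pt (w *m g).
Proof. by rewrite /ptrans /pt; apply/eq_genmx/eqmxMr/genmxE. Qed.

Lemma ptrans_join g x y : ptrans g (join x y) = join (ptrans g x) (ptrans g y).
Proof. by rewrite /join /ptrans -genmx_adds; apply/eq_genmx/addsmxMr. Qed.

Section UnitTransformation.
Variables (g : 'M[R]_3) (ug : g \in unitmx).

Lemma mxrank_ptrans x : \rank (ptrans g x) = \rank x.
Proof. by rewrite genmxE mxrankMfree ?row_free_unit. Qed.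

Lemma ptrans_point x : is_point x -> is_point (ptrans g x).
Proof. by move=> [rx _]; split; rewrite ?mxrank_ptrans ?genmx_id. Qed.

Lemma ptrans_line x : is_line x -> is_line (ptrans g x).
Proof. by move=> [rx _]; split; rewrite ?mxrank_ptrans ?genmx_id. Qed.

Lemma ptrans_sub x y : (ptrans g x <= ptrans g y)%MS = (x <= y)%MS.
Proof. by rewrite !genmxE submxMfree ?row_free_unit. Qed.

Lemma ptrans_inj x y : <<x>>%MS = x -> <<y>>%MS = y -> ptrans g x = ptrans g y -> x = y.
Proof.
move=> gx gy /genmxP; rewrite !submxMfree ?row_free_unit // => xy.
exact: genmx_fixed_eq.
Qed.

Lemma obox_map_box X : is_obox X -> is_obox (map_box g X).
Proof.
move=> [[hp [hq [hr [hs [ht hb]]]]] [[hP [hQ [hR [hS [hT hB]]]]]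
  [[eP [eQ [eR [eS [eT eB]]]]] [TB [zp [zq [zr [zs [zt zb]]]]]]]]].
have meet_ne x : is_point x -> (bT X :&: bB X)%MS != x ->
    (ptrans g (bT X) :&: ptrans g (bB X))%MS != ptrans g x.
  move=> hx; apply: contra => /eqP e; apply/eqP/cap_lines => //;
    by rewrite -ptrans_sub -e ?capmxSl ?capmxSr.
rewrite /is_obox /=.
split; first by do ![exact: ptrans_point | split].
split; first by do ![exact: ptrans_line | split].
split; first by rewrite eP eQ eR eS eT eB !ptrans_join.
split; first by apply: contra TB => /eqP /(ptrans_inj hT.2 hB.2) ->.
by do ![exact: meet_ne | split].
Qed.

End UnitTransformation.

Lemma map_box_mul g h X : map_box h (map_box g X) = map_box (g *m h) X.
Proof. by rewrite /map_box /= !ptrans_mul. Qed.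

Lemma map_box1 X : is_obox X -> map_box 1%:M X = X.
Proof.
case: X => p q r s t b P Q R' S T B.
move=> [[[_ gp] [[_ gq] [[_ gr] [[_ gs] [[_ gt] [_ gb]]]]]]
  [[[_ gP] [[_ gQ] [[_ gR] [[_ gS] [[_ gT] [_ gB]]]]]] _]] /=.
by rewrite /map_box /= !ptrans1.
Qed.

Lemma map_box_ibox g X : map_box g (ibox X) = ibox (map_box g X).
Proof. by case: X. Qed.

Lemma obox_ibox X : is_obox X -> is_obox (ibox X).
Proof.
move=> [[hp [hq [hr [hs [ht hb]]]]] [[hP [hQ [hR [hS [hT hB]]]]]
  [[eP [eQ [eR [eS [eT eB]]]]] [TB [zp [zq [zr [zs [zt zb]]]]]]]]].
have eB' : bB X = join (bs X) (br X) by rewrite eB /join addsmxC.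
by rewrite /is_obox /= capmxC eq_sym.
Qed.

Lemma obox_jbox X : is_obox X -> is_obox (jbox X).
Proof.
move=> [[hp [hq [hr [hs [ht hb]]]]] [[hP [hQ [hR [hS [hT hB]]]]]
  [[eP [eQ [eR [eS [eT eB]]]]] [TB [zp [zq [zr [zs [zt zb]]]]]]]]].
have eT' : bT X = join (bq X) (bp X) by rewrite eT /join addsmxC.
have eB' : bB X = join (bs X) (br X) by rewrite eB /join addsmxC.
by [].
Qed.

Ltac mx3_entrywise :=
  apply/matrixP; let i := fresh "i" in let j := fresh "j" in
  move=> i j; rewrite !mxE !big_ord_recr !big_ord0 /= !mxE;
  case: (ord3P i) => ->; case: (ord3P j) => -> /=; rewrite ?mxE /=.

Lemma cosh_opp (x : R) : cosh (- x) = cosh x.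
Proof. by rewrite /cosh opprK addrC. Qed.

Lemma sinh_opp (x : R) : sinh (- x) = - sinh x.
Proof. by rewrite /sinh opprK -mulNr opprB. Qed.

Definition sym3 (a c b : R) : 'M[R]_3 := mx3 (vec3 1 0 0) (vec3 0 a c) (vec3 0 c b).

Lemma Sigma_sym3 (e d : R) :
  Sigma e d = sym3 (expR (- d) * cosh e) (- sinh e) (expR d * cosh e).
Proof.
rewrite /Sigma /sym3 /mx3; apply/matrixP => i j; rewrite !mxE.
by case: (ord3P i) => ->; case: (ord3P j) => -> /=; rewrite ?mxE.
Qed.

Lemma Sigma_opp_sym3 (e d : R) :
  Sigma (- e) (- d) = sym3 (expR d * cosh e) (- - sinh e) (expR (- d) * cosh e).
Proof. by rewrite Sigma_sym3 cosh_opp sinh_opp opprK. Qed.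

Lemma Sigma_det (e d : R) : expR (- d) * cosh e * (expR d * cosh e) - (- sinh e) ^+ 2 = 1.
Proof.
have e0 : expR e != 0 by rewrite gt_eqF ?expR_gt0.
have d0 : expR d != 0 by rewrite gt_eqF ?expR_gt0.
by rewrite /cosh /sinh !expRN; field; rewrite ?e0 ?d0.
Qed.

Lemma mul_sym3 (a b c : R) : a * b - c ^+ 2 = 1 -> sym3 a c b *m sym3 b (- c) a = 1%:M.
Proof. by move=> det1; rewrite /sym3 /mx3; mx3_entrywise; rewrite ?mulr1n ?mulr0n; nra. Qed.

Lemma Sigma_mulmx_opp (e d : R) : Sigma e d *m Sigma (- e) (- d) = 1%:M.
Proof. by rewrite Sigma_sym3 Sigma_opp_sym3 mul_sym3 // Sigma_det. Qed.

Lemma Sigma_unit (e d : R) : Sigma e d \in unitmx.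
Proof. exact: (mulmx1_unit (Sigma_mulmx_opp e d)).1. Qed.

Lemma Sigma_opp (e d : R) : Sigma (- e) (- d) = invmx (Sigma e d).
Proof. by rewrite -[LHS](mulKmx (Sigma_unit e d)) Sigma_mulmx_opp mulmx1. Qed.

Definition ibox_mx : 'M[R]_3 := mx3 (vec3 1 0 0) (vec3 0 0 1) (vec3 0 (-1) 0).

Lemma vec3_ibox_mx (a b c : R) : vec3 a b c *m ibox_mx = vec3 a (- c) b.
Proof.
rewrite vec3_mul_mx3; apply/rowP => j; rewrite !mxE.
by case: ifP => _; [|case: ifP => _]; ring.
Qed.

Lemma ibox_mx_unit : ibox_mx \in unitmx.
Proof.
have : ibox_mx *m ibox_mx^T = 1%:M by rewrite /ibox_mx /mx3; mx3_entrywise; ring.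
by case/mulmx1_unit.
Qed.

Lemma sym3_ibox_mx (a b c : R) : sym3 b (- c) a *m ibox_mx = ibox_mx *m sym3 a c b.
Proof. by rewrite /sym3 /ibox_mx /mx3; mx3_entrywise; ring. Qed.

Lemma Sigma_ibox_mx (e d : R) : Sigma (- e) (- d) *m ibox_mx = ibox_mx *m Sigma e d.
Proof. by rewrite Sigma_opp_sym3 Sigma_sym3 sym3_ibox_mx. Qed.

Lemma tbasis_ibox X M : is_tbasis X M -> is_tbasis (ibox X) (ibox_mx *m M).
Proof.
move=> [uM [p1 q1 r1 s1]]; split; first by rewrite unitmx_mul ibox_mx_unit.
rewrite /= p1 q1 r1 s1 !mulmxA !vec3_ibox_mx !oppr0.
have -> : vec3 1 (-1) 0 = - vec3 (-1) 1 0 :> 'rV[R]_3 by rewrite -vec3N opprK oppr0.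
have -> : vec3 (-1) (-1) 0 = - vec3 1 1 0 :> 'rV[R]_3 by rewrite -vec3N oppr0.
by rewrite !mulNmx !ptN.
Qed.

Lemma invmxM g h : g \in unitmx -> h \in unitmx -> invmx (g *m h) = invmx h *m invmx g.
Proof. exact: invrM. Qed.

Lemma conjmx_basis_mul G M H : G \in unitmx -> M \in unitmx ->
  conjmx (invmx (G *m M)) H = conjmx (invmx M) (conjmx (invmx G) H).
Proof. by move=> uG uM; rewrite invmxM // conjuMumx ?unitmx_inv. Qed.

Lemma tbasis_map_box X M G : G \in unitmx -> is_tbasis X M ->
  is_tbasis (map_box (conjmx (invmx M) G) X) (G *m M).
Proof.
move=> uG [uM [p1 q1 r1 s1]]; split; first by rewrite unitmx_mul uG.
by rewrite /= conjVmx // p1 q1 r1 s1 !ptrans_pt !mulmxA !mulmxK.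
Qed.

Lemma sigma_relP (e d : R) X M : is_obox X -> is_tbasis X M ->
  forall Y, sigma_rel e d X Y <-> Y = map_box (conjmx (invmx M) (Sigma e d)) X.
Proof.
move=> hX hM Y; split => [[_ [N [hN ->]]] | ->].
  by rewrite -conjVmx ?hN.1 // (tbasis_conj_uniq _ hM hN).
by split=> //; exists M; rewrite conjVmx ?hM.1.
Qed.

Lemma sigma_rel_total (e d : R) X : is_obox X -> exists Y, sigma_rel e d X Y.
Proof.
move=> hX; have [M hM] := tbasis_exists hX.
by exists (map_box (conjmx (invmx M) (Sigma e d)) X); apply/(sigma_relP _ _ hX hM).
Qed.

Lemma sigma_rel_inverse (e d : R) X Y Z :
  sigma_rel e d X Y -> sigma_rel (- e) (- d) Y Z <-> Z = X.
Proof.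
case=> hX [M [hM ->]]; have uM := hM.1; have uS := Sigma_unit e d.
rewrite -conjVmx //.
have hY : is_obox (map_box (conjmx (invmx M) (Sigma e d)) X).
  by apply: obox_map_box hX; rewrite conjVmx // !unitmx_mul unitmx_inv uM uS.
rewrite (sigma_relP _ _ hY (tbasis_map_box uS hM)) map_box_mul conjmx_basis_mul //.
rewrite Sigma_opp [conjmx (invmx (Sigma e d)) _]conjVmx // mulmxKV //.
rewrite -conjmxM ?inE ?stablemx_unit ?unitmx_inv // mulmxV //.
by rewrite conjmx_scalar ?row_free_unit ?unitmx_inv // map_box1.
Qed.

Lemma sigma_rel_ibox (e d : R) X Z : is_obox X ->
  sigma_rel (- e) (- d) (ibox X) Z <-> exists2 Y, sigma_rel e d X Y & Z = ibox Y.
Proof.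
move=> hX; have [M hM] := tbasis_exists hX; have uQ := ibox_mx_unit.
rewrite (sigma_relP _ _ (obox_ibox hX) (tbasis_ibox hM)) conjmx_basis_mul ?hM.1 //.
rewrite [conjmx (invmx ibox_mx) _]conjVmx // -mulmxA Sigma_ibox_mx mulKmx // map_box_ibox.
split=> [-> | [Y /(sigma_relP _ _ hX hM) -> //]].
by exists (map_box (conjmx (invmx M) (Sigma e d)) X) => //; apply/(sigma_relP _ _ hX hM).
Qed.

Local Open Scope classical_set_scope.

Lemma rel_image_inverse (Rl Rl' : obox R -> obox R -> Prop) (A : set (obox R)) :
  (forall X, A X -> exists Y, Rl X Y) ->
  (forall X Y Z, Rl X Y -> Rl' Y Z <-> Z = X) ->
  rel_image Rl' (rel_image Rl A) = A.
Proof.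
move=> total inv; apply/seteqP; split=> [Z [Y [X AX XY] /(inv _ _ _ XY) -> //] | X AX].
by have [Y XY] := total X AX; exists Y; [exists X | apply/(inv _ _ _ XY)].
Qed.

Lemma image_rel_image (f : obox R -> obox R) (Rl Rl' : obox R -> obox R -> Prop)
    (A : set (obox R)) :
  (forall X Z, A X -> Rl' (f X) Z <-> exists2 Y, Rl X Y & Z = f Y) ->
  f @` rel_image Rl A = rel_image Rl' (f @` A).
Proof.
move=> comm; apply/seteqP; split=> Z.
  by case=> Y [X AX XY] <-; exists (f X); [exists X | apply/comm => //; exists Y].
by case=> _ [X AX <-] /(comm _ _ AX) [Y XY ->]; exists Y => //; exists X.
Qed.

End MarkedBoxes.

Theorem lemma7p3 (R : realType) (e d : R) (A : set (obox R)) :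
  is_mbox A ->
  [/\ sigma_mb (- e) (- d) (sigma_mb e d A) = A,
      sigma_mb e d (sigma_mb (- e) (- d) A) = A &
      i_mb (sigma_mb e d A) = sigma_mb (- e) (- d) (i_mb A)].
Proof.
case=> X0 [hX0 ->].
have boxes X : mbox X0 X -> is_obox X by case=> ->; last exact: obox_jbox.
have sigma_K (e' d' : R) : sigma_mb (- e') (- d') (sigma_mb e' d' (mbox X0)) = mbox X0.
  apply: rel_image_inverse => [X /boxes /sigma_rel_total //|]; exact: sigma_rel_inverse.
split; [exact: sigma_K | by have := sigma_K (- e) (- d); rewrite !opprK |].
by apply: image_rel_image => X Z /boxes; exact: sigma_rel_ibox.
Qed.
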